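(* Let $A$ be a circular $m\times n$ matrix and let $\Gamma$ be a closed directed path (not necessarily simple) in $D(A)$. Then for every $j\in[n]$, $$p^+(\Gamma,j)-p^-(\Gamma,j)=p(\Gamma).$$
   Context: Notation: $[n]=\{1,\dots,n\}$ with addition mod $n$ (index $0$ identified with $n$); for $a,c\in[n]$ with $t\ge0$ minimal such that $a+t\equiv c\pmod n$, $[a,c)_n=\{a,\dots,a+t-1\}$ (mod $n$). An $m\times n$ $\{0,1\}$-matrix $A$ is circular if for each row $i$ there are $\ell_i\in[n]$ and an integer $2\le k_i\le n-1$ with row $i$ the incidence vector of $[\ell_i,\ell_i+k_i)_n$. $D(A)$: node set $[n]$ (labels mod $n$); forward row arcs $a_i=(\ell_i-1,\ell_i+k_i-1)$ ($i\in[m]$), forward short arcs $a_{m+j}=(j-1,j)$ ($j\in[n]$), reverse row arcs $\bar a_i=(\ell_i+k_i-1,\ell_i-1)$, reverse short arcs $\bar a_{m+j}=(j,j-1)$; lengths $l(a_i)=k_i$, $l(a_{m+j})=1$, $l(\bar a_i)=-k_i$, $l(\bar a_{m+j})=-1$. The winding number of a closed directed path $\Gamma$ is the integer $p(\Gamma)$ with $p(\Gamma)n=\sum_{a\in E(\Gamma)}l(a)$ (arcs counted with multiplicity). A forward row arc $a_i$ jumps over node $j$ iff $j\in[\ell_i,\ell_i+k_i)_n$; the forward short arc $(j-1,j)$ jumps over $j$ only; a reverse arc $\bar a_k$ jumps over $j$ iff $a_k$ does. $p^+(\Gamma,j)$ (resp. $p^-(\Gamma,j)$) is the number of forward (resp.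 reverse) arcs of $\Gamma$, counted with multiplicity, that jump over $j$. *)

From mathcomp Require Import all_boot all_order all_algebra.
Set Implicit Arguments. Unset Strict Implicit. Unset Printing Implicit Defensive.
Import GRing.Theory Num.Theory.

(* Node labels of D(A) are natural numbers read modulo n (label n = label 0). *)

Definition in_cint (n l len x : nat) : bool :=
  [exists t : 'I_len, (l + t) %% n == x %% n].

(* A is circular with data l_i (in [n]) and k_i (2 <= k_i <= n-1):
   row i is the incidence vector of [l_i, l_i + k_i)_n.
   Column c : 'I_n stands for column c+1 of [n]. *)
Definition circular_with (m n : nat) (A : 'M[bool]_(m, n))
  (l k : 'I_m -> nat) : Prop :=
  (forall i, 1 <= l i <= n) /\ (forall i, 2 <= k i <= n.-1) /\
  (forall i (c : 'I_n), A i c = in_cint n (l i) (k i) c.+1).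

(* Arcs of D(A): forward row arcs a_i, forward short arcs a_{m+j}
   (indexed by j' : 'I_n, standing for j = j'+1 in [n]), and their reverses. *)
Inductive darc (m n : nat) :=
| RowF of 'I_m | ShortF of 'I_n | RowR of 'I_m | ShortR of 'I_n.

Section Arcs.
Variables (m n : nat) (l k : 'I_m -> nat).

Definition atail (a : darc m n) : nat :=
  match a with
  | RowF i => (l i).-1
  | ShortF j => j
  | RowR i => (l i + k i).-1
  | ShortR j => j.+1
  end.

Definition ahead (a : darc m n) : nat :=
  match a with
  | RowF i => (l i + k i).-1
  | ShortF j => j.+1
  | RowR i => (l i).-1
  | ShortR j => j
  end.

Definition alen (a : darc m n) : int :=
  match a with
  | RowF i => (k i)%:Z
  | ShortF _ => 1
  | RowR i => - (k i)%:Z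
  | ShortR _ => -1
  end.

Definition aforward (a : darc m n) : bool :=
  match a with RowF _ | ShortF _ => true | _ => false end.

Definition ajumps (a : darc m n) (x : nat) : bool :=
  match a with
  | RowF i | RowR i => in_cint n (l i) (k i) x
  | ShortF j | ShortR j => j.+1 %% n == x %% n
  end.

Definition closed_path (s : seq (darc m n)) : bool :=
  (0 < size s) && cycle (fun a b => ahead a %% n == atail b %% n) s.

Definition pplus (s : seq (darc m n)) (x : nat) : nat :=
  count (fun a => aforward a && ajumps a x) s.
Definition pminus (s : seq (darc m n)) (x : nat) : nat :=
  count (fun a => ~~ aforward a && ajumps a x) s.

End Arcs.

From mathcomp Require Import all_boot all_order all_algebra zify.
Import GRing.Theory Num.Theory.

Set Implicit Arguments.
Unset Strict Implicit.
Unset Printing Implicit Defensive.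

(* Fix the node j and measure every node x by its forward circular distance
   d(x) from j, a number in [0, n).  An arc from t to t + len (0 < len <= n)
   passes over j exactly when d(t) + len >= n, in which case d drops by
   n - len instead of rising by len: so n * [jumps over j] + d(head) =
   len + d(tail), and the reverse arc satisfies the negated identity.
   Summed along a closed path the distances of heads and tails cancel,
   leaving n * (p^+ - p^-) = sum of the lengths = n * p. *)

Section CircularDistance.
Variables (n j : nat).
Hypothesis n_gt0 : (0 < n)%N.

Definition cdist (x : nat) : nat := (x + (n - j %% n)) %% n.

Lemma cdist_lt x : (cdist x < n)%N.
Proof. exact: ltn_pmod. Qed.

Lemma cdist_mod x : cdist (x %% n) = cdist x.
Proof. by rewrite /cdist modnDml. Qed.

Lemma cdistD x c : cdist (x + c) = ((cdist x + c) %% n)%N.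
Proof. by rewrite /cdist modnDml; congr (_ %% _)%N; lia. Qed.

Lemma modn_eq0_lt_double y : (0 < y < n + n)%N -> (y %% n == 0)%N = (y == n).
Proof.
move=> y_bound; case: (ltnP y n) => [y_lt|y_ge].
  by rewrite modn_small //; apply/eqP/eqP; lia.
rewrite -(subnK y_ge) modnDr modn_small; last lia.
by apply/eqP/eqP; lia.
Qed.

Lemma cdist_eq0 x : (cdist x == 0)%N = (x %% n == j %% n).
Proof.
have := ltn_pmod j n_gt0; have := ltn_pmod x n_gt0.
rewrite -cdist_mod /cdist modn_eq0_lt_double; last lia.
by move=> *; apply/eqP/eqP; lia.
Qed.

Lemma in_cint1 a x : in_cint n a 1 x = (a %% n == x %% n).
Proof.
apply/existsP/idP => [[u]|]; first by rewrite (ord1 u) addn0.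
by exists ord0; rewrite addn0.
Qed.

Lemma in_cint_cdist t len : (len <= n)%N ->
  in_cint n t.+1 len j = (n <= cdist t + len)%N.
Proof.
move=> len_le; have := cdist_lt t => dt_lt.
apply/existsP/idP => [[u]|cross].
  have u_lt := ltn_ord u.
  rewrite -cdist_eq0 addSnnS cdistD modn_eq0_lt_double; last lia.
  by move/eqP; lia.
have u_lt : (n - (cdist t).+1 < len)%N by lia.
exists (Ordinal u_lt); rewrite -cdist_eq0 /= addSnnS cdistD.
by rewrite modn_eq0_lt_double; [apply/eqP|]; lia.
Qed.

Lemma cdist_step t len : (len <= n)%N ->
  (n * in_cint n t.+1 len j + cdist (t + len) = len + cdist t)%N.
Proof.
move=> len_le; rewrite in_cint_cdist // cdistD; have := cdist_lt t.
case: (ltnP (cdist t + len) n) => [no_cross|cross] dt_lt.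
  by rewrite modn_small //; lia.
by rewrite -(subnK cross) modnDr modn_small; lia.
Qed.

End CircularDistance.

Local Open Scope ring_scope.

Lemma sum_cycle_eq (T : Type) (R : zmodType) (f g : T -> R) (s : seq T) :
  cycle (fun a b => g a == f b) s -> \sum_(a <- s) f a = \sum_(a <- s) g a.
Proof.
have telescope x0 r : path (fun a b => g a == f b) x0 r ->
    \sum_(a <- r) f a + g (last x0 r) = g x0 + \sum_(a <- r) g a.
  elim: r x0 => [|b r IH] x0 /=; first by rewrite !big_nil addrC.
  case/andP=> /eqP gx0 /IH; rewrite !big_cons gx0 -addrA => ->.
  by rewrite addrCA.
case: s => [|x r] /= cyc; first by rewrite !big_nil.
have := telescope _ _ cyc; rewrite last_rcons addrC => /addrI.
by rewrite !big_rcons !big_cons /= addrC => ->; rewrite addrC.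
Qed.

Section JumpCount.
Variables (m n : nat) (l k : 'I_m -> nat).

Definition ajump_sign (a : darc m n) (x : nat) : int :=
  if ajumps l k a x then (if aforward a then 1 else -1) else 0.

Lemma pplus_sub_pminus s x :
  (pplus l k s x)%:Z - (pminus l k s x)%:Z = \sum_(a <- s) ajump_sign a x.
Proof.
elim: s => [|a s IH]; first by rewrite big_nil.
rewrite big_cons -IH /pplus /pminus /= !PoszD /ajump_sign.
by case: (ajumps l k a x); case: (aforward a) => /=; lia.
Qed.

Variable j : nat.
Hypothesis n_gt0 : (0 < n)%N.
Hypothesis l_gt0 : forall i, (0 < l i)%N.
Hypothesis k_le : forall i, (k i <= n)%N.

Local Notation d := (cdist n j).

Lemma ajump_sign_cdist a :
  n%:Z * ajump_sign a j + (d (ahead l k a))%:Z =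
  alen k a + (d (atail l k a))%:Z.
Proof.
have row i :
    (n * in_cint n (l i) (k i) j + d (l i + k i).-1 = k i + d (l i).-1)%N.
  by rewrite -{1 2}(prednK (l_gt0 i)) addSn; apply: cdist_step.
have short i : (n * (i.+1 %% n == j %% n) + d i.+1 = 1 + d i)%N.
  by rewrite -in_cint1 -[RHS](cdist_step j n_gt0 i n_gt0) addn1.
rewrite /ajump_sign; case: a => i /=.
- by have := row i; case: in_cint; lia.
- by have := short i; case: eqP; lia.
- by have := row i; case: in_cint; lia.
- by have := short i; case: eqP; lia.
Qed.

Lemma closed_path_winding s : closed_path l k s ->
  n%:Z * \sum_(a <- s) ajump_sign a j = \sum_(a <- s) alen k a.
Proof.
case/andP=> _ cyc.
have heads_tails :
    \sum_(a <- s) (d (atail l k a))%:Z = \sum_(a <- s) (d (ahead l k a))%:Z.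
  apply: sum_cycle_eq; apply: sub_cycle cyc => a b /eqP eq_mod.
  by rewrite -cdist_mod eq_mod cdist_mod.
apply: (addIr (\sum_(a <- s) (d (ahead l k a))%:Z)).
rewrite -{2}heads_tails mulr_sumr -!big_split /=.
by apply: eq_bigr => a _; rewrite ajump_sign_cdist.
Qed.

End JumpCount.

Theorem lemma4p1 (m n : nat) (A : 'M[bool]_(m, n)) (l k : 'I_m -> nat)
  (HA : circular_with A l k)
  (s : seq (darc m n)) (Hs : closed_path l k s)
  (p : int) (Hp : p * n%:Z = \sum_(a <- s) alen k a)
  (j : nat) (Hj : (1 <= j <= n)%N) :
  (pplus l k s j)%:Z - (pminus l k s j)%:Z = p.
Proof.
have n_gt0 : (0 < n)%N by lia.
case: HA => l_bound [k_bound _].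
have l_gt0 i : (0 < l i)%N by case/andP: (l_bound i).
have k_le i : (k i <= n)%N by case/andP: (k_bound i); lia.
rewrite pplus_sub_pminus.
apply: (@mulIf _ n%:Z); first by lia.
by rewrite mulrC (closed_path_winding j n_gt0 l_gt0 k_le Hs) Hp.
Qed.
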